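(* Let $w$ be an infinite word with $\delta(w)<\gamma$, where $\gamma=(1+\sqrt5)/2$. Then $w$ is periodic.
   Context: Words are over an arbitrary alphabet; infinite words are right-infinite. The empty word counts as a palindromic prefix. If $w$ has infinitely many palindromic prefixes, let $(n_i)_{i\ge1}$ be the increasing sequence of their lengths ($n_1=0$) and $\delta(w)=\limsup n_{i+1}/n_i$; otherwise $\delta(w)=\infty$. *)

From Stdlib Require Import Reals Lra Lia.
From Coquelicot Require Import Coquelicot.
Open Scope R_scope.

Definition word (A : Type) := nat -> A.

Definition pal_prefix {A : Type} (w : word A) (m : nat) : Prop :=
  forall i : nat, (i < m)%nat -> w i = w (m - 1 - i)%nat.

(* n enumerates, in increasing order, all lengths of palindromic prefixes
   of w (0-indexed: n 0 = 0 is the paper's n_1). Existence of such an n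
   is equivalent to w having infinitely many palindromic prefixes. *)
Definition pal_prefix_enum {A : Type} (w : word A) (n : nat -> nat) : Prop :=
  n 0%nat = 0%nat /\
  (forall i : nat, (n i < n (S i))%nat) /\
  (forall m : nat, pal_prefix w m <-> exists i : nat, n i = m).

Definition delta_of (n : nat -> nat) : Rbar :=
  LimSup_seq (fun i => INR (n (S i)) / INR (n i)).

Definition golden_ratio : R := (1 + sqrt 5) / 2.

(* Periodic (purely periodic): w = u u u ... for some nonempty u. *)
Definition periodic {A : Type} (w : word A) : Prop :=
  exists p : nat, (0 < p)%nat /\ forall i : nat, w (i + p)%nat = w i.

(* If the lengths n_i of palindromic prefixes satisfy n_{i+1} < γ n_i from some point on,
   then γ^2 = γ + 1 gives n_{i+2} <= n_{i+1} + n_i. Two palindromic prefixes of lengths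
   a <= b make b - a a period of the longer one, so consecutive differences d_i = n_{i+1} - n_i
   are periods with d_i + d_{i+1} <= n_{i+1}, and by Fine and Wilf a period g <= d_i of the
   prefix of length n_{i+1} yields the period gcd(g, d_{i+1}) <= d_{i+1} of the next prefix.
   These periods can only decrease finitely often, so one of them is eventually a period of
   arbitrarily long prefixes, i.e. of w. *)

From Stdlib Require Import Reals.
From Coquelicot Require Import Coquelicot.
From Stdlib Require Import Arith Lia Lra Psatz Classical.

Section PrefixPeriods.

Context {A : Type} (w : word A).

Local Open Scope nat_scope.

Definition prefix_has_period (L p : nat) : Prop :=
  forall k, k + p < L -> w k = w (k + p).

Lemma prefix_has_period_le L L' p :
  prefix_has_period L p -> L' <= L -> prefix_has_period L' p.
Proof. intros Hp HL k Hk; apply Hp; lia. Qed.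

Lemma prefix_has_period_sub L p q :
  prefix_has_period L p -> prefix_has_period L q -> p < q -> p + q <= L ->
  prefix_has_period L (q - p).
Proof.
  intros Hp Hq Hlt HL k Hk.
  destruct (lt_dec (k + q) L) as [Hkq | Hkq].
  - rewrite (Hq k Hkq).
    replace (k + q) with (k + (q - p) + p) by lia.
    symmetry; apply Hp; lia.
  - assert (Ep := Hp (k - p) ltac:(lia)).
    assert (Eq := Hq (k - p) ltac:(lia)).
    replace (k - p + p) with k in Ep by lia.
    replace (k - p + q) with (k + (q - p)) in Eq by lia.
    congruence.
Qed.

(* The weak form of the Fine and Wilf theorem: the bound p + q instead of p + q - gcd p q. *)
Lemma fine_wilf L p q :
  prefix_has_period L p -> prefix_has_period L q -> p + q <= L ->
  prefix_has_period L (Nat.gcd p q).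
Proof.
  remember (p + q) as s eqn:Hs.
  revert p q Hs; induction s as [s IH] using lt_wf_ind.
  intros p q Hs Hp Hq HL.
  destruct (Nat.eq_dec p 0) as [-> | Hp0]; [exact Hq |].
  destruct (Nat.eq_dec q 0) as [-> | Hq0]; [now rewrite Nat.gcd_0_r |].
  destruct (lt_eq_lt_dec p q) as [[Hlt | ->] | Hlt].
  - rewrite <- Nat.gcd_sub_diag_r by lia.
    apply (IH q) with (p := p) (q := q - p); try lia; auto.
    apply prefix_has_period_sub; auto; lia.
  - now rewrite Nat.gcd_diag.
  - rewrite Nat.gcd_comm, <- Nat.gcd_sub_diag_r, Nat.gcd_comm by lia.
    apply (IH p) with (p := p - q) (q := q); try lia; auto.
    apply prefix_has_period_sub; auto; lia.
Qed.

(* Positions beyond L are reduced by the period q back into the prefix of length L. *)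
Lemma prefix_has_period_extend L M g q :
  prefix_has_period M q -> prefix_has_period L g -> 0 < q ->
  q + g <= L -> L <= M -> prefix_has_period M g.
Proof.
  intros Hq Hg Hq0 HL HM k.
  induction k as [k IH] using lt_wf_ind; intros Hk.
  destruct (lt_dec (k + g) L) as [HkL | HkL]; [now apply Hg |].
  assert (E1 := Hq (k - q) ltac:(lia)).
  assert (E2 := Hq (k - q + g) ltac:(lia)).
  assert (E3 := IH (k - q) ltac:(lia) ltac:(lia)).
  replace (k - q + q) with k in E1 by lia.
  replace (k - q + g + q) with (k + g) in E2 by lia.
  congruence.
Qed.

Lemma pal_prefix_period a b :
  pal_prefix w a -> pal_prefix w b -> a <= b -> prefix_has_period b (b - a).
Proof.
  intros Ha Hb Hab k Hk.
  rewrite (Hb (k + (b - a)) Hk).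
  replace (b - 1 - (k + (b - a))) with (a - 1 - k) by lia.
  apply Ha; lia.
Qed.

Lemma periodic_of_prefix_periods p :
  0 < p -> (forall L, prefix_has_period L p) -> periodic w.
Proof.
  intros Hp Hper; exists p; split; [exact Hp |].
  intros i; symmetry; apply (Hper (S (i + p))); lia.
Qed.

End PrefixPeriods.

Section FibonacciPalindromes.

Local Open Scope nat_scope.

Variables (A : Type) (w : word A) (n : nat -> nat) (N : nat).
Hypothesis n_increasing : forall i, n i < n (S i).
Hypothesis n_pal_prefix : forall i, pal_prefix w (n i).
Hypothesis n_fibonacci_bound : forall i, N <= i -> n (S (S i)) <= n (S i) + n i.

Let d i := n (S i) - n i.

Definition admissible_period (g i : nat) : Prop :=
  N <= i /\ 0 < g /\ g <= d i /\ prefix_has_period w (n (S i)) g.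

Lemma admissible_period_start : admissible_period (d N) N.
Proof.
  pose proof (n_increasing N).
  repeat split; unfold d; try lia.
  apply pal_prefix_period; auto; lia.
Qed.

Lemma admissible_period_step g i :
  admissible_period g i -> admissible_period (Nat.gcd g (d (S i))) (S i).
Proof.
  intros (HNi & Hg0 & Hgd & Hgper).
  pose proof (n_increasing i); pose proof (n_increasing (S i)).
  pose proof (n_fibonacci_bound i HNi).
  assert (Hsum : g + d (S i) <= n (S i)) by (unfold d in *; lia).
  assert (Hd_per : prefix_has_period w (n (S (S i))) (d (S i))).
  { apply pal_prefix_period; auto; lia. }
  assert (Hgcd_le : Nat.gcd g (d (S i)) <= g).
  { apply Nat.divide_pos_le; [lia | apply Nat.gcd_divide_l]. }
  assert (Hgcd_pos : 0 < Nat.gcd g (d (S i))).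
  { destruct (Nat.eq_dec (Nat.gcd g (d (S i))) 0) as [E | E]; [| lia].
    apply Nat.gcd_eq_0_l in E; lia. }
  assert (Hgcd_per : prefix_has_period w (n (S i)) (Nat.gcd g (d (S i)))).
  { apply fine_wilf; [exact Hgper | | exact Hsum].
    apply prefix_has_period_le with (n (S (S i))); [exact Hd_per | lia]. }
  repeat split; try lia.
  - apply Nat.divide_pos_le; [unfold d; lia | apply Nat.gcd_divide_r].
  - apply prefix_has_period_extend with (n (S i)) (d (S i)); auto;
      unfold d in *; lia.
Qed.

Lemma admissible_period_periodic g i : admissible_period g i -> periodic w.
Proof.
  revert i; induction g as [g IH] using lt_wf_ind; intros i Hgi.
  destruct (classic (exists j, admissible_period g j /\ Nat.gcd g (d (S j)) < g))
    as [[j [Hgj Hlt]] | Hstable].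
  { apply (IH _ Hlt (S j)), admissible_period_step, Hgj. }
  assert (Hforever : forall k, admissible_period g (i + k)).
  { induction k as [| k IHk]; [now rewrite Nat.add_0_r |].
    replace (i + S k) with (S (i + k)) by lia.
    assert (Hgcd : Nat.gcd g (d (S (i + k))) = g).
    { assert (Nat.gcd g (d (S (i + k))) <= g).
      { apply Nat.divide_pos_le; [apply IHk | apply Nat.gcd_divide_l]. }
      assert (~ Nat.gcd g (d (S (i + k))) < g) by (intro; eauto).
      lia. }
    rewrite <- Hgcd; now apply admissible_period_step. }
  apply periodic_of_prefix_periods with g; [apply Hgi |].
  intros L.
  assert (Hn_ge : forall m, m <= n m).
  { induction m; [lia | pose proof (n_increasing m); lia]. }
  apply prefix_has_period_le with (n (S (i + L))); [apply Hforever |].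
  specialize (Hn_ge (S (i + L))); lia.
Qed.

Theorem pal_prefix_fibonacci_periodic : periodic w.
Proof. exact (admissible_period_periodic _ _ admissible_period_start). Qed.

End FibonacciPalindromes.

Lemma golden_ratio_square : golden_ratio * golden_ratio = golden_ratio + 1.
Proof.
  unfold golden_ratio.
  assert (H5 := sqrt_sqrt 5 ltac:(lra)).
  nra.
Qed.

Lemma golden_ratio_gt_1 : 1 < golden_ratio.
Proof.
  unfold golden_ratio.
  assert (sqrt 1 < sqrt 5) by (apply sqrt_lt_1; lra).
  rewrite sqrt_1 in *; lra.
Qed.

(* (γ - 1) γ = 1, so c < γ b = b + (γ - 1) b < b + (γ - 1) γ a = b + a. *)
Lemma golden_ratio_fibonacci (a b c : R) :
  b < golden_ratio * a -> c < golden_ratio * b -> c < b + a.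
Proof.
  intros Hb Hc.
  pose proof golden_ratio_square; pose proof golden_ratio_gt_1.
  assert (Hpos : 0 < (golden_ratio - 1) * (golden_ratio * a - b))
    by (apply Rmult_lt_0_compat; lra).
  assert (E : (golden_ratio - 1) * (golden_ratio * a - b)
              = (golden_ratio * golden_ratio - golden_ratio - 1) * a + (a + b - golden_ratio * b))
    by ring.
  rewrite H in E; lra.
Qed.

Lemma LimSup_seq_lt_eventually (u : nat -> R) (c : R) :
  Rbar_lt (LimSup_seq u) (Finite c) -> exists N, forall i, (N <= i)%nat -> u i < c.
Proof.
  destruct (ex_LimSup_seq u) as [l Hl].
  rewrite (is_LimSup_seq_unique _ _ Hl).
  destruct l as [l | |]; simpl in *; intros Hlt; [| contradiction | now apply Hl].
  assert (Hpos : 0 < c - l) by lra.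
  destruct (Hl (mkposreal _ Hpos)) as [_ [N HN]].
  exists N; intros i Hi; specialize (HN i Hi); simpl in HN; lra.
Qed.

Theorem corollary1p5 (A : Type) (w : word A) (n : nat -> nat) :
  pal_prefix_enum w n ->
  Rbar_lt (delta_of n) (Finite golden_ratio) ->
  periodic w.
Proof.
  intros [_ [Hinc Hpal]] Hdelta.
  destruct (LimSup_seq_lt_eventually _ _ Hdelta) as [N HN].
  assert (Hratio : forall i, (S N <= i)%nat -> INR (n (S i)) < golden_ratio * INR (n i)).
  { intros [| i] Hi; [lia |].
    assert (0 < INR (n (S i))) by (apply lt_0_INR; pose proof (Hinc i); lia).
    apply Rlt_div_l; [lra | apply HN; lia]. }
  apply (pal_prefix_fibonacci_periodic A w n (S N) Hinc).
  - intros i; apply Hpal; now exists i.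
  - intros i Hi; apply Nat.lt_le_incl, INR_lt; rewrite plus_INR.
    apply golden_ratio_fibonacci; apply Hratio; lia.
Qed.
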